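(* Let $\mathbb{T}^*_{\mathsf{ctl}} = \mathsf{src}!b_1(\mathtt{unit}).\mathsf{src}!b_2(\mathtt{unit}).\mu\mathbf{t}.\,\mathsf{src}?b_1(\mathtt{unit}).\mathsf{sk}?b_1(\mathtt{unit}).\mathsf{sk}!b_1(\mathtt{unit}).\mathsf{src}!b_1(\mathtt{unit}).\mathsf{src}?b_2(\mathtt{unit}).\mathsf{sk}?b_2(\mathtt{unit}).\mathsf{sk}!b_2(\mathtt{unit}).\mathsf{src}!b_2(\mathtt{unit}).\mathbf{t}$ and $\mathbb{T}_{\mathsf{ctl}} = \mu\mathbf{t}.\,\mathsf{src}!b_1(\mathtt{unit}).\mathsf{src}?b_1(\mathtt{unit}).\mathsf{sk}?b_1(\mathtt{unit}).\mathsf{sk}!b_1(\mathtt{unit}).\mathsf{src}!b_2(\mathtt{unit}).\mathsf{src}?b_2(\mathtt{unit}).\mathsf{sk}?b_2(\mathtt{unit}).\mathsf{sk}!b_2(\mathtt{unit}).\mathbf{t}$, where $\mathsf{src}$ and $\mathsf{sk}$ are distinct participants and $b_1,b_2$ are labels. Then $\mathbb{T}^*_{\mathsf{ctl}}\leqslant\mathbb{T}_{\mathsf{ctl}}$.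
   Context: Sorts: $\mathsf{S} ::= \mathtt{nat} \mid \mathtt{int} \mid \mathtt{bool} \mid \mathtt{unit}$; subsorting $\leq:$ is the least reflexive relation with $\mathtt{nat}\leq:\mathtt{int}$. Session types: $\mathbb{T} ::= \&_{i\in I}\mathsf{p}?\ell_i(\mathsf{S}_i).\mathbb{T}_i \mid \oplus_{i\in I}\mathsf{p}!\ell_i(\mathsf{S}_i).\mathbb{T}_i \mid \mathtt{end} \mid \mu\mathbf{t}.\mathbb{T} \mid \mathbf{t}$ (singleton choices written without $\&/\oplus$; $?$ is input from, $!$ is output to the named participant). Session trees: possibly infinite terms $\mathsf{T} ::= \mathtt{end} \mid \&_{i\in I}\mathsf{p}?\ell_i(\mathsf{S}_i).\mathsf{T}_i \mid \oplus_{i\in I}\mathsf{p}!\ell_i(\mathsf{S}_i).\mathsf{T}_i$ (coinductively); $\mathcal{T}(\mathbb{T})$ is the tree obtained from a closed type by unfolding recursion. SISO trees: $\mathsf{W} ::= \mathtt{end} \mid \mathsf{p}?\ell(\mathsf{S}).\mathsf{W} \mid \mathsf{p}!\ell(\mathsf{S}).\mathsf{W}$; $\mathrm{act}(\mathsf{W})$ is the set of symbols $\mathsf{p}?$/$\mathsf{p}!$ of inputs/outputs occurring in $\mathsf{W}$. $\mathcal{A}^{(\mathsf{p})}$: nonempty finite sequences of inputs $\mathsf{q}?\ell(\mathsf{S})$, $\mathsf{q}\neq\mathsf{p}$; $\mathcal{B}^{(\mathsf{p})}$: nonempty finite sequences of inputs $\mathsf{r}?\ell(\mathsf{S})$ (any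 $\mathsf{r}$) and outputs $\mathsf{q}!\ell(\mathsf{S})$, $\mathsf{q}\neq\mathsf{p}$ (used as prefixes). SISO refinement $\lesssim$: largest relation closed backward under $\mathsf{p}?\ell(\mathsf{S}).\mathsf{W}\lesssim\mathsf{p}?\ell(\mathsf{S}').\mathsf{W}'$ if $\mathsf{S}'\leq:\mathsf{S}$, $\mathsf{W}\lesssim\mathsf{W}'$; $\mathsf{p}?\ell(\mathsf{S}).\mathsf{W}\lesssim\mathcal{A}^{(\mathsf{p})}.\mathsf{p}?\ell(\mathsf{S}').\mathsf{W}'$ if $\mathsf{S}'\leq:\mathsf{S}$, $\mathsf{W}\lesssim\mathcal{A}^{(\mathsf{p})}.\mathsf{W}'$, $\mathrm{act}(\mathsf{W})=\mathrm{act}(\mathcal{A}^{(\mathsf{p})}.\mathsf{W}')$; $\mathsf{p}!\ell(\mathsf{S}).\mathsf{W}\lesssim\mathsf{p}!\ell(\mathsf{S}').\mathsf{W}'$ if $\mathsf{S}\leq:\mathsf{S}'$, $\mathsf{W}\lesssim\mathsf{W}'$; $\mathsf{p}!\ell(\mathsf{S}).\mathsf{W}\lesssim\mathcal{B}^{(\mathsf{p})}.\mathsf{p}!\ell(\mathsf{S}').\mathsf{W}'$ if $\mathsf{S}\leq:\mathsf{S}'$, $\mathsf{W}\lesssim\mathcal{B}^{(\mathsf{p})}.\mathsf{W}'$, $\mathrm{act}(\mathsf{W})=\mathrm{act}(\mathcal{B}^{(\mathsf{p})}.\mathsf{W}')$; $\mathtt{end}\lesssim\mathtt{end}$. SO trees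 $\mathsf{U} ::= \mathtt{end}\mid\&_{i\in I}\mathsf{p}?\ell_i(\mathsf{S}_i).\mathsf{U}_i\mid\mathsf{p}!\ell(\mathsf{S}).\mathsf{U}$, SI trees $\mathsf{V} ::= \mathtt{end}\mid\mathsf{p}?\ell(\mathsf{S}).\mathsf{V}\mid\oplus_{i\in I}\mathsf{p}!\ell_i(\mathsf{S}_i).\mathsf{V}_i$; $[\![\mathsf{T}]\!]_{SO}$ is the set of SO trees obtained from $\mathsf{T}$ by keeping exactly one branch (with its payload) at every selection node and all branches at branching nodes, and $[\![\mathsf{T}]\!]_{SI}$ the set of SI trees obtained by keeping exactly one branch at every branching node and all branches at selection nodes. Subtyping: $\mathsf{T}\leqslant\mathsf{T}'$ iff $\forall\mathsf{U}\in[\![\mathsf{T}]\!]_{SO}\ \forall\mathsf{V}'\in[\![\mathsf{T}']\!]_{SI}\ \exists\mathsf{W}\in[\![\mathsf{U}]\!]_{SI}\ \exists\mathsf{W}'\in[\![\mathsf{V}']\!]_{SO}$: $\mathsf{W}\lesssim\mathsf{W}'$; $\mathbb{T}\leqslant\mathbb{T}'$ iff $\mathcal{T}(\mathbb{T})\leqslant\mathcal{T}(\mathbb{T}')$. *)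

From Stdlib Require Import List.
Import ListNotations.
Set Implicit Arguments.

Inductive sort : Type := SNat | SInt | SBool | SUnit.

Definition subsort (s s' : sort) : Prop := s = s' \/ (s = SNat /\ s' = SInt).

Section SessionTheory.
Variables (P L : Type). (* participants and labels *)

Inductive stype : Type :=
| SEnd : stype
| SVar : nat -> stype
| SMu : nat -> stype -> stype
| SBra : P -> list (L * sort * stype) -> stype   (* &_{i} p?l_i(S_i).T_i *)
| SSel : P -> list (L * sort * stype) -> stype.  (* +_{i} p!l_i(S_i).T_i *)

(* Substitution of a (closed) type S for variable x. *)
Fixpoint subst (x : nat) (S T : stype) : stype :=
  match T with
  | SEnd => SEnd
  | SVar y => if Nat.eqb y x then S else SVar y
  | SMu y T1 => if Nat.eqb y x then SMu y T1 else SMu y (subst x S T1)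
  | SBra p bs => SBra p (map (fun b => (fst b, subst x S (snd b))) bs)
  | SSel p bs => SSel p (map (fun b => (fst b, subst x S (snd b))) bs)
  end.

CoInductive tree : Type :=
| TEnd : tree
| TBra : P -> list (L * sort * tree) -> tree
| TSel : P -> list (L * sort * tree) -> tree.

Inductive unf : stype -> stype -> Prop :=
| unf_mu x T T' : unf (subst x (SMu x T) T) T' -> unf (SMu x T) T'
| unf_end : unf SEnd SEnd
| unf_bra p bs : unf (SBra p bs) (SBra p bs)
| unf_sel p bs : unf (SSel p bs) (SSel p bs).

CoInductive treeof : stype -> tree -> Prop :=
| to_end T : unf T SEnd -> treeof T TEnd
| to_bra T p bs ts : unf T (SBra p bs) ->
    Forall2 (fun b t => fst b = fst t /\ treeof (snd b) (snd t)) bs ts ->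
    treeof T (TBra p ts)
| to_sel T p bs ts : unf T (SSel p bs) ->
    Forall2 (fun b t => fst b = fst t /\ treeof (snd b) (snd t)) bs ts ->
    treeof T (TSel p ts).

CoInductive so_proj : tree -> tree -> Prop :=
| so_end : so_proj TEnd TEnd
| so_bra p bs us :
    Forall2 (fun b u => fst b = fst u /\ so_proj (snd b) (snd u)) bs us ->
    so_proj (TBra p bs) (TBra p us)
| so_sel p bs l s t u : In (l, s, t) bs -> so_proj t u ->
    so_proj (TSel p bs) (TSel p [(l, s, u)]).

CoInductive si_proj : tree -> tree -> Prop :=
| si_end : si_proj TEnd TEnd
| si_bra p bs l s t u : In (l, s, t) bs -> si_proj t u ->
    si_proj (TBra p bs) (TBra p [(l, s, u)])
| si_sel p bs us :
    Forall2 (fun b u => fst b = fst u /\ si_proj (snd b) (snd u)) bs us ->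
    si_proj (TSel p bs) (TSel p us).

Inductive action : Type :=
| AIn : P -> L -> sort -> action
| AOut : P -> L -> sort -> action.

Definition prefix1 (a : action) (t : tree) : tree :=
  match a with
  | AIn q l s => TBra q [(l, s, t)]
  | AOut q l s => TSel q [(l, s, t)]
  end.

Definition prepend (A : list action) (t : tree) : tree := fold_right prefix1 t A.

Definition is_A (p : P) (A : list action) : Prop :=
  A <> [] /\ Forall (fun a => exists q l s, a = AIn q l s /\ q <> p) A.

Definition is_B (p : P) (B : list action) : Prop :=
  B <> [] /\ Forall (fun a => (exists r l s, a = AIn r l s) \/
                              (exists q l s, a = AOut q l s /\ q <> p)) B.

(* act(W): symbols p? (true, p) and p! (false, p) occurring in W. *)
Inductive occurs (a : bool * P) : tree -> Prop :=
| oc_bra_here p bs : a = (true, p) -> occurs a (TBra p bs)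
| oc_sel_here p bs : a = (false, p) -> occurs a (TSel p bs)
| oc_bra_in p bs l s t : In (l, s, t) bs -> occurs a t -> occurs a (TBra p bs)
| oc_sel_in p bs l s t : In (l, s, t) bs -> occurs a t -> occurs a (TSel p bs).

Definition act_eq (W W' : tree) : Prop := forall a, occurs a W <-> occurs a W'.

CoInductive refine : tree -> tree -> Prop :=
| ref_in p l s W s' W' : subsort s' s -> refine W W' ->
    refine (TBra p [(l, s, W)]) (TBra p [(l, s', W')])
| ref_inA p l s W s' A W' : is_A p A -> subsort s' s ->
    refine W (prepend A W') -> act_eq W (prepend A W') ->
    refine (TBra p [(l, s, W)]) (prepend A (TBra p [(l, s', W')]))
| ref_out p l s W s' W' : subsort s s' -> refine W W' ->
    refine (TSel p [(l, s, W)]) (TSel p [(l, s', W')])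
| ref_outB p l s W s' B W' : is_B p B -> subsort s s' ->
    refine W (prepend B W') -> act_eq W (prepend B W') ->
    refine (TSel p [(l, s, W)]) (prepend B (TSel p [(l, s', W')]))
| ref_end : refine TEnd TEnd.

Definition tree_sub (T T' : tree) : Prop :=
  forall U, so_proj T U -> forall V', si_proj T' V' ->
  exists W W', si_proj U W /\ so_proj V' W' /\ refine W W'.

Definition stype_sub (T T' : stype) : Prop :=
  exists t t', treeof T t /\ treeof T' t' /\ tree_sub t t'.

End SessionTheory.

Arguments SEnd {P L}.

Definition inp {P L : Type} (p : P) (l : L) (k : stype P L) : stype P L :=
  SBra p [(l, SUnit, k)].
Definition out {P L : Type} (p : P) (l : L) (k : stype P L) : stype P L :=
  SSel p [(l, SUnit, k)].

Definition T_ctl_star {P L : Type} (src sk : P) (b1 b2 : L) : stype P L :=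
  out src b1 (out src b2 (SMu 0
    (inp src b1 (inp sk b1 (out sk b1 (out src b1
    (inp src b2 (inp sk b2 (out sk b2 (out src b2 (@SVar P L 0))))))))))).

Definition T_ctl {P L : Type} (src sk : P) (b1 b2 : L) : stype P L :=
  SMu 0 (out src b1 (inp src b1 (inp sk b1 (out sk b1
        (out src b2 (inp src b2 (inp sk b2 (out sk b2 (@SVar P L 0))))))))).

(* Both trees have a single branch at every node, so their SO and SI projections
   coincide with them and subtyping reduces to SISO refinement of the two trees.
   With H_b = src?b.sk?b.sk!b, they are T* = src!b1.src!b2.(H_b1 src!b1 H_b2 src!b2)^w
   and T = (src!b1 H_b1 src!b2 H_b2)^w. Once the leading src!b1 are matched, every
   output src!b of T* is refined by anticipating it past the handshake H_b' that
   precedes it in T: this is a B^(src) prefix because it outputs only to sk <> src.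
   After one period the pair of residual trees recurs, which closes the coinduction,
   and the side conditions on action sets hold because every residual tree uses
   exactly the symbols src?, sk?, sk!, src!. *)

From Stdlib Require Import List PeanoNat.
Import ListNotations.
Set Implicit Arguments.

Section Trees.
Variables P L : Type.

Definition tree_force (t : tree P L) : tree P L :=
  match t with TBra p bs => TBra p bs | TSel p bs => TSel p bs | e => e end.

Lemma tree_force_eq (t : tree P L) : t = tree_force t.
Proof. destruct t; reflexivity. Qed.

(* [loop_from A B] performs [B] and then [A] forever ([TEnd] if [A] is empty);
   the second argument keeps the corecursion guarded. *)
CoFixpoint loop_from (A B : list (action P L)) : tree P L :=
  match B with
  | a :: B' => prefix1 a (loop_from A B')
  | [] => match A with [] => TEnd P L | a :: A' => prefix1 a (loop_from A A') end
  end.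

Definition loop (A : list (action P L)) : tree P L := loop_from A [].

Lemma loop_from_prepend A B : loop_from A B = prepend B (loop A).
Proof.
  induction B as [|a B IH]; [reflexivity|].
  rewrite (tree_force_eq (loop_from A (a :: B))); simpl; rewrite IH.
  destruct a; reflexivity.
Qed.

Lemma loop_unfold A : A <> [] -> loop A = prepend A (loop A).
Proof.
  intro HA; destruct A as [|a A]; [contradiction|].
  rewrite (tree_force_eq (loop (a :: A))) at 1; simpl.
  rewrite loop_from_prepend; destruct a; reflexivity.
Qed.

Definition participant (a : action P L) : P :=
  match a with AIn q _ _ | AOut q _ _ => q end.

Definition symbol (a : action P L) : bool * P :=
  match a with AIn q _ _ => (true, q) | AOut q _ _ => (false, q) end.

Lemma occurs_prepend s A (t : tree P L) : occurs s t -> occurs s (prepend A t).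
Proof.
  intro Ht; induction A as [|[q l u | q l u] A IH]; simpl; [exact Ht| |];
    [eapply oc_bra_in | eapply oc_sel_in]; eauto using in_eq.
Qed.

Lemma occurs_prepend_in a A (t : tree P L) : In a A -> occurs (symbol a) (prepend A t).
Proof.
  induction A as [|[q l u | q l u] A IH]; [intros []| |]; intros [<-|Ha]; simpl;
    solve [ constructor; reflexivity
          | eapply oc_bra_in; eauto using in_eq
          | eapply oc_sel_in; eauto using in_eq ].
Qed.

Lemma occurs_prepend_loop a l A : In a A -> occurs (symbol a) (prepend l (loop A)).
Proof.
  intro Ha; apply occurs_prepend.
  assert (HA : A <> []) by (intros ->; contradiction).
  rewrite (loop_unfold HA); apply occurs_prepend_in, Ha.
Qed.

CoInductive siso_on (Q : P -> Prop) : tree P L -> Prop :=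
| siso_bra p l s t : Q p -> siso_on Q t -> siso_on Q (TBra p [(l, s, t)])
| siso_sel p l s t : Q p -> siso_on Q t -> siso_on Q (TSel p [(l, s, t)]).

Lemma siso_on_prepend_loop (Q : P -> Prop) l A :
  A <> [] -> Forall (fun a => Q (participant a)) l ->
  Forall (fun a => Q (participant a)) A ->
  siso_on Q (prepend l (loop A)).
Proof.
  revert A l; cofix CIH; intros A l HA Hl HQA.
  destruct l as [|a l].
  - rewrite (loop_unfold HA); destruct A as [|a A]; [contradiction|].
    destruct a; constructor;
      first [exact (Forall_inv HQA) | exact (CIH _ A HA (Forall_inv_tail HQA) HQA)].
  - destruct a; constructor;
      first [exact (Forall_inv Hl) | exact (CIH A l HA (Forall_inv_tail Hl) HQA)].
Qed.

Lemma occurs_siso_on Q s (t : tree P L) : occurs s t -> siso_on Q t -> Q (snd s).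
Proof.
  induction 1 as [p bs -> | p bs -> | p bs l s' t' Hin _ IH | p bs l s' t' Hin _ IH];
    inversion 1; subst; simpl; try assumption;
    destruct Hin as [E|[]]; injection E as <- <- <-; auto.
Qed.

Lemma act_eq_siso_on Q (W W' : tree P L) :
  siso_on Q W -> siso_on Q W' ->
  (forall s, Q (snd s) -> occurs s W) -> (forall s, Q (snd s) -> occurs s W') ->
  act_eq W W'.
Proof.
  intros HW HW' Hall Hall' s; split; intro Hs.
  - exact (Hall' s (occurs_siso_on Hs HW)).
  - exact (Hall s (occurs_siso_on Hs HW')).
Qed.

Lemma so_proj_siso_on Q : forall (t U : tree P L), siso_on Q t -> so_proj t U -> si_proj U t.
Proof.
  cofix CIH; intros t U Ht HU.
  destruct Ht as [p l s t' _ Ht' | p l s t' _ Ht'].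
  - inversion HU as [| ? ? ? Hbs |]; subst.
    inversion Hbs as [| [[l' s'] t''] u ? ? [E Hu] Hnil]; subst; inversion Hnil; subst.
    destruct u as [[lu su] u]; simpl in E, Hu; injection E as <- <-.
    eapply si_bra; [left; reflexivity | exact (CIH _ _ Ht' Hu)].
  - inversion HU as [| | ? ? l' s' t'' u Hin Hu]; subst.
    destruct Hin as [E|[]]; injection E as <- <- <-.
    apply si_sel; constructor; [split; [reflexivity | exact (CIH _ _ Ht' Hu)] | constructor].
Qed.

Lemma si_proj_siso_on Q : forall (t V : tree P L), siso_on Q t -> si_proj t V -> so_proj V t.
Proof.
  cofix CIH; intros t V Ht HV.
  destruct Ht as [p l s t' _ Ht' | p l s t' _ Ht'].
  - inversion HV as [| ? ? l' s' t'' u Hin Hu |]; subst.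
    destruct Hin as [E|[]]; injection E as <- <- <-.
    apply so_bra; constructor; [split; [reflexivity | exact (CIH _ _ Ht' Hu)] | constructor].
  - inversion HV as [| | ? ? ? Hbs]; subst.
    inversion Hbs as [| [[l' s'] t''] u ? ? [E Hu] Hnil]; subst; inversion Hnil; subst.
    destruct u as [[lu su] u]; simpl in E, Hu; injection E as <- <-.
    eapply so_sel; [left; reflexivity | exact (CIH _ _ Ht' Hu)].
Qed.

Lemma tree_sub_siso_on Q Q' (t t' : tree P L) :
  siso_on Q t -> siso_on Q' t' -> refine t t' -> tree_sub t t'.
Proof.
  intros Ht Ht' Hr U HU V' HV'.
  exists t, t'; split; [|split].
  - exact (so_proj_siso_on Ht HU).
  - exact (si_proj_siso_on Ht' HV').
  - exact Hr.
Qed.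

Definition sprefix (a : action P L) (T : stype P L) : stype P L :=
  match a with
  | AIn q l s => SBra q [(l, s, T)]
  | AOut q l s => SSel q [(l, s, T)]
  end.

Definition sprepend (A : list (action P L)) (T : stype P L) : stype P L :=
  fold_right sprefix T A.

Lemma subst_sprepend x S A T : subst x S (sprepend A T) = sprepend A (subst x S T).
Proof. induction A as [|[] A IH]; simpl; rewrite ?IH; reflexivity. Qed.

Lemma treeof_sprepend_loop x :
  forall l A, A <> [] ->
  treeof (sprepend l (SMu x (sprepend A (@SVar P L x)))) (prepend l (loop A)).
Proof.
  cofix CIH; intros l A HA.
  destruct l as [|a l].
  - rewrite (loop_unfold HA); destruct A as [|a A]; [contradiction|].
    assert (Hunf : unf (SMu x (sprepend (a :: A) (@SVar P L x)))
                       (sprefix a (sprepend A (SMu x (sprepend (a :: A) (@SVar P L x)))))).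
    { apply unf_mu; rewrite subst_sprepend; simpl; rewrite Nat.eqb_refl.
      destruct a; constructor. }
    destruct a; [eapply to_bra | eapply to_sel]; try exact Hunf;
      (constructor; [split; [reflexivity | exact (CIH A _ HA)] | constructor]).
  - destruct a; simpl; [eapply to_bra; [apply unf_bra|] | eapply to_sel; [apply unf_sel|]];
      (constructor; [split; [reflexivity | exact (CIH l A HA)] | constructor]).
Qed.

End Trees.

Lemma subsort_refl s : subsort s s.
Proof. left; reflexivity. Qed.

Ltac refine_common_prefix :=
  repeat (first [apply ref_in | apply ref_out]; [apply subsort_refl|]).

Section Controller.
Variables (P L : Type) (src sk : P) (b1 b2 : L).
Hypothesis src_sk : src <> sk.

Definition handshake (b : L) : list (action P L) :=
  [AIn src b SUnit; AIn sk b SUnit; AOut sk b SUnit].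

Definition reply (b : L) : action P L := AOut src b SUnit.

Definition ctl_star_body : list (action P L) :=
  handshake b1 ++ reply b1 :: handshake b2 ++ [reply b2].

Definition ctl_body : list (action P L) :=
  reply b1 :: handshake b1 ++ reply b2 :: handshake b2.

Definition ctl_party (p : P) : Prop := p = src \/ p = sk.

Lemma is_B_handshake b : is_B src (handshake b).
Proof.
  split; [discriminate|].
  repeat apply Forall_cons; try apply Forall_nil;
    [left; do 3 eexists; reflexivity | left; do 3 eexists; reflexivity |].
  right; do 3 eexists; split; [reflexivity | intro E; apply src_sk; symmetry; exact E].
Qed.

Ltac ctl_parties :=
  unfold ctl_star_body, ctl_body, handshake, reply; simpl;
  repeat apply Forall_cons; try apply Forall_nil; unfold ctl_party; simpl; auto.

Lemma ctl_star_body_nonempty : ctl_star_body <> [].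
Proof. discriminate. Qed.

Lemma ctl_body_nonempty : ctl_body <> [].
Proof. discriminate. Qed.

Lemma ctl_star_body_parties : Forall (fun a => ctl_party (participant a)) ctl_star_body.
Proof. ctl_parties. Qed.

Lemma ctl_body_parties : Forall (fun a => ctl_party (participant a)) ctl_body.
Proof. ctl_parties. Qed.

Lemma occurs_ctl_symbols l A : incl (reply b1 :: handshake b1) A ->
  forall s, ctl_party (snd s) -> occurs s (prepend l (loop A)).
Proof.
  intros Hincl [[|] p] Hp; simpl in Hp; destruct Hp as [-> | ->];
    [ apply occurs_prepend_loop with (a := AIn src b1 SUnit)
    | apply occurs_prepend_loop with (a := AIn sk b1 SUnit)
    | apply occurs_prepend_loop with (a := reply b1)
    | apply occurs_prepend_loop with (a := AOut sk b1 SUnit) ];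
    apply Hincl; simpl; auto.
Qed.

Lemma act_eq_ctl l l' :
  Forall (fun a => ctl_party (participant a)) l ->
  Forall (fun a => ctl_party (participant a)) l' ->
  act_eq (prepend l (loop ctl_star_body)) (prepend l' (loop ctl_body)).
Proof.
  intros Hl Hl'; apply act_eq_siso_on with (Q := ctl_party).
  - exact (siso_on_prepend_loop ctl_party ctl_star_body_nonempty Hl ctl_star_body_parties).
  - exact (siso_on_prepend_loop ctl_party ctl_body_nonempty Hl' ctl_body_parties).
  - apply occurs_ctl_symbols; intros a Ha; simpl in Ha; simpl; tauto.
  - apply occurs_ctl_symbols; intros a Ha; simpl in Ha; simpl; tauto.
Qed.

Lemma refine_ctl_loops :
  refine (prepend [reply b2] (loop ctl_star_body))
         (prepend (handshake b1 ++ reply b2 :: handshake b2) (loop ctl_body)).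
Proof.
  cofix CIH.
  change (refine (TSel src [(b2, SUnit, loop ctl_star_body)])
            (prepend (handshake b1)
               (TSel src [(b2, SUnit, prepend (handshake b2) (loop ctl_body))]))).
  apply ref_outB; [apply is_B_handshake | apply subsort_refl | |].
  - rewrite (loop_unfold ctl_star_body_nonempty).
    rewrite (loop_unfold ctl_body_nonempty).
    simpl; refine_common_prefix.
    change (refine (TSel src [(b1, SUnit,
                               prepend (handshake b2 ++ [reply b2]) (loop ctl_star_body))])
              (prepend (handshake b2)
                 (TSel src [(b1, SUnit, prepend (handshake b1 ++ reply b2 :: handshake b2)
                                                (loop ctl_body))]))).
    apply ref_outB; [apply is_B_handshake | apply subsort_refl | |].
    + simpl; refine_common_prefix; exact CIH.
    + apply act_eq_ctl with (l := handshake b2 ++ [reply b2])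
                            (l' := handshake b2 ++ handshake b1 ++ reply b2 :: handshake b2);
        ctl_parties.
  - apply act_eq_ctl with (l := []) (l' := handshake b1 ++ handshake b2); ctl_parties.
Qed.

Lemma refine_ctl : refine (prepend [reply b1; reply b2] (loop ctl_star_body)) (loop ctl_body).
Proof.
  rewrite (loop_unfold ctl_body_nonempty); simpl.
  apply ref_out; [apply subsort_refl | exact refine_ctl_loops].
Qed.

Lemma tree_sub_ctl : tree_sub (prepend [reply b1; reply b2] (loop ctl_star_body)) (loop ctl_body).
Proof.
  apply tree_sub_siso_on with (Q := ctl_party) (Q' := ctl_party).
  - apply siso_on_prepend_loop;
      [exact ctl_star_body_nonempty | ctl_parties | exact ctl_star_body_parties].
  - exact (siso_on_prepend_loop ctl_party (l := []) ctl_body_nonempty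
             (Forall_nil _) ctl_body_parties).
  - exact refine_ctl.
Qed.

End Controller.

Theorem proposition6p1 (P L : Type) (src sk : P) (b1 b2 : L) :
  src <> sk ->
  stype_sub (T_ctl_star src sk b1 b2) (T_ctl src sk b1 b2).
Proof.
  intro src_sk.
  exists (prepend [reply src b1; reply src b2] (loop (ctl_star_body src sk b1 b2))),
         (loop (ctl_body src sk b1 b2)).
  split; [|split].
  - exact (treeof_sprepend_loop 0 [reply src b1; reply src b2]
             (@ctl_star_body_nonempty P L src sk b1 b2)).
  - exact (treeof_sprepend_loop 0 [] (@ctl_body_nonempty P L src sk b1 b2)).
  - exact (tree_sub_ctl src_sk).
Qed.
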